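(* Suppose $L$ is in the block upper-triangular form $L=[L^{k,q}]_{k,q=1}^K$ with $L^{k,q}=0$ for $k>q$, where each diagonal block $L^{k,k}$ ($n_k\times n_k$) is irreducible or of dimension one, and for each $k<K$ there is $q>k$ with $L^{k,q}\ne0$. For $k<K$, let $\tilde L^{k,k}$, $D^k$, $\xi^k$, $\Xi^k$, $R^k$ be as defined in the context. Then $Q^k:=\frac12\big[\Xi^kL^{k,k}+(\Xi^kL^{k,k})^\top\big]=R^k+\Xi^kD^k$ is positive definite and $$\Xi^k\le\frac{\rho(\Xi^k)}{\lambda_{\min}(Q^k)}\,Q^k\quad\text{for all }k<K,$$ where $\lambda_{\min}(Q^k)$ is the smallest eigenvalue of $Q^k$ and $M\le N$ means $N-M$ is positive semidefinite.
   Context: $L=D-\mathcal A$ is the Laplacian of a weighted directed graph with nonnegative weights $a_{ij}$ ($a_{ii}=0$), so off-diagonal entries are $\le0$ and row sums of $L$ are zero. Define $\tilde L^{k,k}$ by $\tilde L^{k,k}_{ij}=L^{k,k}_{ij}$ for $i\ne j$ and $\tilde L^{k,k}_{ii}=-\sum_{p\ne i}L^{k,k}_{ip}$; let $D^k=L^{k,k}-\tilde L^{k,k}=\mathrm{diag}(D^k_1,\dots,D^k_{n_k})$ (a nonnegative diagonal matrix). Let $(\xi^k)^\top$ be the positive left eigenvector of $\tilde L^{k,k}$ for eigenvalue $0$ with components summing to $1$ (for $n_k=1$, $\xi^k=1$), $\Xi^k=\mathrm{diag}(\xi^k)$, and $R^k=\frac12[\Xi^k\tilde L^{k,k}+(\Xi^k\tilde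 L^{k,k})^\top]$. $\rho$ denotes spectral radius. *)

(* Scalars: a numClosedFieldType C (e.g. algC); the real
   numbers of the paper are the elements of C satisfying [x \is Num.real]. *)
From HB Require Import structures.
From mathcomp Require Import all_boot all_order all_algebra.
Set Implicit Arguments. Unset Strict Implicit. Unset Printing Implicit Defensive.
Import Order.TTheory GRing.Theory Num.Theory.
Local Open Scope ring_scope.

Section Defs.
Variable C : numClosedFieldType.

Definition ctr {m n : nat} (M : 'M[C]_(m, n)) : 'M[C]_(n, m) :=
  (map_mx (fun z : C => z^*) M)^T.

Definition laplacian {n : nat} (a : 'M[C]_n) : 'M[C]_n :=
  \matrix_(i, j) ((i == j)%:R * (\sum_(p < n) a i p) - a i j).

Definition weight_matrix {n : nat} (a : 'M[C]_n) : Prop :=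
  (forall i j, 0 <= a i j) /\ (forall i, a i i = 0).

(* irreducible matrix: there is no nonempty proper index set S with
   M i j = 0 for all i in S, j notin S (i.e. M is not permutation-similar
   to a block triangular matrix with nontrivial square diagonal blocks). *)
Definition irreducible_mx {n : nat} (M : 'M[C]_n) : Prop :=
  forall S : {set 'I_n}, S != set0 -> S != setT ->
    exists i j, [/\ i \in S, j \notin S & M i j != 0].

Definition tildeL {n : nat} (M : 'M[C]_n) : 'M[C]_n :=
  \matrix_(i, j) (if i == j then - \sum_(p < n | p != i) M i p else M i j).

Definition symmetrize {n : nat} (M : 'M[C]_n) : 'M[C]_n :=
  2%:R^-1 *: (M + M^T).

Definition hermitian_mx {n : nat} (M : 'M[C]_n) : Prop := ctr M = M.

Definition posdef {n : nat} (M : 'M[C]_n) : Prop :=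
  hermitian_mx M /\
  forall x : 'cV[C]_n, x != 0 -> 0 < (ctr x *m M *m x) 0 0.

Definition psd {n : nat} (M : 'M[C]_n) : Prop :=
  hermitian_mx M /\
  forall x : 'cV[C]_n, 0 <= (ctr x *m M *m x) 0 0.

Definition is_spectral_radius {n : nat} (M : 'M[C]_n) (r : C) : Prop :=
  (exists l, eigenvalue M l /\ r = `|l|) /\
  (forall l, eigenvalue M l -> `|l| <= r).

Definition is_min_eigenvalue {n : nat} (M : 'M[C]_n) (m : C) : Prop :=
  eigenvalue M m /\ (forall l, eigenvalue M l -> m <= l).

End Defs.

From HB Require Import structures.
From mathcomp Require Import all_boot all_order all_algebra.
From mathcomp Require Import ring.
Import Order.TTheory GRing.Theory Num.Theory.
Local Open Scope ring_scope.
Local Open Scope sesquilinear_scope.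

(* Write Q = sym(Xi M) with M = L^{kk}.  Since xi is a left null vector of
   tildeL M, the column sums of Xi M equal xi_i d_i, where d_i is the i-th row
   sum of M, i.e. the weight leaving block k from node i.  Hence
     x^* Q x = 1/2 sum_{i,j} xi_i (-M_ij) |x_i - x_j|^2 + sum_i xi_i d_i |x_i|^2,
   a sum of nonnegative terms.  If it vanishes, x is constant along the edges
   of the irreducible block and zero at a node with d_i > 0 (such a node exists
   because block k feeds a later block), so x = 0.  The matrix inequality
   combines the Rayleigh bound lambda_min x^* x <= x^* Q x, read off the
   spectral decomposition of Q, with x^* Xi x <= rho(Xi) x^* x. *)

Section QuadraticForms.
Set Implicit Arguments.
Unset Strict Implicit.
Variable C : numClosedFieldType.

Local Notation quad M x := ((ctr x *m M *m x) 0 0).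

Lemma ctrM m n p (A : 'M[C]_(m, n)) (B : 'M[C]_(n, p)) :
  ctr (A *m B) = ctr B *m ctr A.
Proof. by rewrite /ctr map_mxM trmx_mul. Qed.

Lemma ctrK m n (A : 'M[C]_(m, n)) : ctr (ctr A) = A.
Proof. by apply/matrixP => i j; rewrite !mxE conjCK. Qed.

Lemma ctr_real m n (A : 'M[C]_(m, n)) :
  (forall i j, A i j \is Num.real) -> ctr A = A^T.
Proof. by move=> Ar; apply/matrixP => i j; rewrite !mxE (CrealP (Ar _ _)). Qed.

Lemma hermitian_mxB n (A B : 'M[C]_n) :
  hermitian_mx A -> hermitian_mx B -> hermitian_mx (A - B).
Proof.
move=> /matrixP hA /matrixP hB; apply/matrixP => i j.
by move: (hA i j) (hB i j); rewrite !mxE rmorphB => <- <-.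
Qed.

Lemma hermitian_mxZ n (c : C) (A : 'M[C]_n) :
  c \is Num.real -> hermitian_mx A -> hermitian_mx (c *: A).
Proof.
move=> cr /matrixP hA; apply/matrixP => i j.
by move: (hA i j); rewrite !mxE rmorphM /= (CrealP cr) => <-.
Qed.

Lemma hermitian_diag_mx n (d : 'rV[C]_n) :
  (forall i, d 0 i \is Num.real) -> hermitian_mx (diag_mx d).
Proof.
by move=> dr; rewrite /hermitian_mx ctr_real ?tr_diag_mx // => i j; rewrite mxE rpredMn.
Qed.

Lemma quadE n (M : 'M[C]_n) (x : 'cV[C]_n) :
  quad M x = \sum_i \sum_j (x i 0)^* * M i j * x j 0.
Proof.
rewrite mxE exchange_big /=; apply: eq_bigr => i _.
by rewrite mxE mulr_suml; apply: eq_bigr => j _; rewrite !mxE.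
Qed.

Lemma quad_diagE n (d : 'rV[C]_n) (x : 'cV[C]_n) :
  quad (diag_mx d) x = \sum_i d 0 i * (x i 0 * (x i 0)^*).
Proof. by rewrite mul_mx_diag mxE; apply: eq_bigr => i _; rewrite !mxE; ring. Qed.

Lemma quadZB n (c : C) (A B : 'M[C]_n) (x : 'cV[C]_n) :
  quad (c *: A - B) x = c * quad A x - quad B x.
Proof. by rewrite mulmxBr mulmxBl -scalemxAr -scalemxAl !mxE. Qed.

Lemma irreducible_mx_dim1 n (M : 'M[C]_n) : n = 1%N -> irreducible_mx M.
Proof.
move=> n1 S /set0Pn[j jS] /negP[]; apply/eqP/setP => i; rewrite inE.
suff -> : i = j by [].
have lt1 (k : 'I_n) : (k < 1)%N by rewrite -n1.
by apply: val_inj => /=; move: (lt1 i) (lt1 j); rewrite !ltnS !leqn0 => /eqP-> /eqP->.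
Qed.

Lemma irreducible_mx_const n (M : 'M[C]_n) (f : 'I_n -> C) i0 :
  irreducible_mx M -> (forall i j, M i j != 0 -> f i = f j) ->
  forall i, f i = f i0.
Proof.
move=> Mirr fM; pose S := [set i | f i == f i0].
suff /setP ST : S = setT by move=> i; have := ST i; rewrite !inE => /eqP.
apply/eqP/negPn/negP => ST.
have S0 : S != set0 by apply/set0Pn; exists i0; rewrite inE.
have [i [j [+ + /fM fij]]] := Mirr S S0 ST.
by rewrite !inE fij => ->.
Qed.

Lemma tildeL_sub n (M : 'M[C]_n) : M - tildeL M = diag_mx (\row_i \sum_j M i j).
Proof.
apply/matrixP => i j; rewrite !mxE; have [<-|nij] := eqVneq i j.
  by rewrite [RHS](bigD1 i) //=; ring.
by rewrite subrr.
Qed.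

Lemma symmetrize_diag_mulE n (xi : 'rV[C]_n) (M : 'M[C]_n) i j :
  symmetrize (diag_mx xi *m M) i j = 2%:R^-1 * (xi 0 i * M i j + xi 0 j * M j i).
Proof. by rewrite /symmetrize mul_diag_mx !mxE. Qed.

Lemma trmx_symmetrize n (M : 'M[C]_n) : (symmetrize M)^T = symmetrize M.
Proof. by rewrite /symmetrize linearZ /= linearD /= trmxK addrC. Qed.

Lemma symmetrize_diag_mul_tildeL n (xi : 'rV[C]_n) (M : 'M[C]_n) :
  symmetrize (diag_mx xi *m M) =
  symmetrize (diag_mx xi *m tildeL M) + diag_mx xi *m (M - tildeL M).
Proof.
rewrite tildeL_sub mulmx_diag; apply/matrixP => i j.
rewrite symmetrize_diag_mulE mxE symmetrize_diag_mulE !mxE.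
have two_neq0 : (2%:R : C) != 0 by rewrite pnatr_eq0.
have [<-|/negPf nij] := eqVneq i j; rewrite mulrb ?eqxx ?nij ?(eq_sym j) ?nij.
  by rewrite [\sum_j _](bigD1 i) //=; field.
by rewrite addr0.
Qed.

Lemma colsum_left_kernel_tildeL n (xi : 'rV[C]_n) (M : 'M[C]_n) j :
  xi *m tildeL M = 0 -> \sum_i xi 0 i * M i j = xi 0 j * \sum_p M j p.
Proof.
move=> xiL; have : xi *m M = xi *m diag_mx (\row_i \sum_p M i p).
  by rewrite -tildeL_sub mulmxBr xiL subr0.
by rewrite mul_mx_diag => /matrixP/(_ 0 j); rewrite !mxE.
Qed.

Lemma quad_symmetrize_diag_mulE n (xi : 'rV[C]_n) (M : 'M[C]_n) (x : 'cV[C]_n) :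
  xi *m tildeL M = 0 ->
  quad (symmetrize (diag_mx xi *m M)) x =
    2%:R^-1 * \sum_i \sum_j - (xi 0 i * M i j) * ((x i 0 - x j 0) * (x i 0 - x j 0)^*)
    + \sum_i xi 0 i * (\sum_j M i j) * (x i 0 * (x i 0)^*).
Proof.
move=> xiL; set c := fun i j => xi 0 i * M i j.
set D := \sum_i _ * _ * _.
pose sq i := x i 0 * (x i 0)^*.
pose cross i j := c i j * (x j 0 * (x i 0)^*).
pose cross' i j := c i j * (x i 0 * (x j 0)^*).
have rowD : \sum_i \sum_j - c i j * sq i = - D.
  rewrite /D -sumrN; apply: eq_bigr => i _.
  by rewrite mulr_sumr mulr_suml -sumrN; apply: eq_bigr => j _; rewrite /c /sq; ring.
have colD : \sum_i \sum_j - c i j * sq j = - D.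
  rewrite /D exchange_big -sumrN; apply: eq_bigr => j _ /=.
  rewrite -colsum_left_kernel_tildeL // mulr_suml -sumrN.
  by apply: eq_bigr => i _; rewrite /c /sq; ring.
have expand : \sum_i \sum_j - c i j * ((x i 0 - x j 0) * (x i 0 - x j 0)^*) =
    \sum_i \sum_j - c i j * sq i + \sum_i \sum_j - c i j * sq j
    + \sum_i \sum_j cross i j + \sum_i \sum_j cross' i j.
  rewrite -!big_split /=; apply: eq_bigr => i _.
  by rewrite -!big_split /=; apply: eq_bigr => j _; rewrite rmorphB /= /cross /cross' /sq; ring.
have lhs : quad (symmetrize (diag_mx xi *m M)) x =
    2%:R^-1 * (\sum_i \sum_j cross i j + \sum_i \sum_j cross' i j).
  rewrite quadE [X in _ * (_ + X)]exchange_big -big_split mulr_sumr; apply: eq_bigr => i _.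
  rewrite -big_split mulr_sumr; apply: eq_bigr => j _.
  by rewrite symmetrize_diag_mulE /cross /cross' /c /=; ring.
rewrite lhs expand rowD colD.
have two_neq0 : (2%:R : C) != 0 by rewrite pnatr_eq0.
by field.
Qed.

Lemma posdef_symmetrize_diag_mul n (xi : 'rV[C]_n) (M : 'M[C]_n) :
  (forall i j, M i j \is Num.real) -> (forall i j, i != j -> M i j <= 0) ->
  (forall i, 0 <= \sum_j M i j) -> (exists i, 0 < \sum_j M i j) ->
  irreducible_mx M -> (forall i, 0 < xi 0 i) -> xi *m tildeL M = 0 ->
  posdef (symmetrize (diag_mx xi *m M)).
Proof.
move=> Mreal Moff Mrow [i0 Mrow_gt0] Mirr xi_gt0 xiL; split.
  rewrite /hermitian_mx ctr_real ?trmx_symmetrize // => i j.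
  by rewrite symmetrize_diag_mulE rpredM ?rpredD ?rpredM ?Mreal ?gtr0_real // invr_gt0 ltr0n.
move=> x x_neq0; rewrite quad_symmetrize_diag_mulE //.
pose E i j := - (xi 0 i * M i j) * ((x i 0 - x j 0) * (x i 0 - x j 0)^*).
pose F i := xi 0 i * (\sum_j M i j) * (x i 0 * (x i 0)^*).
change (0 < 2%:R^-1 * (\sum_i \sum_j E i j) + \sum_i F i).
have E_ge0 i j : 0 <= E i j.
  have [<-|nij] := eqVneq i j; first by rewrite /E subrr mul0r mulr0.
  by rewrite /E mulr_ge0 ?mul_conjC_ge0 // oppr_ge0 mulr_ge0_le0 ?Moff // ltW.
have F_ge0 i : 0 <= F i.
  by rewrite /F mulr_ge0 ?mul_conjC_ge0 ?mulr_ge0 // ltW.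
have sumE_ge0 : 0 <= \sum_i \sum_j E i j by rewrite !sumr_ge0 // => i _; rewrite sumr_ge0.
have sumF_ge0 : 0 <= \sum_i F i by rewrite sumr_ge0.
have half_sumE_ge0 : 0 <= 2%:R^-1 * \sum_i \sum_j E i j by rewrite mulr_ge0 ?invr_ge0.
rewrite lt_def addr_ge0 // andbT; apply: contra x_neq0.
rewrite paddr_eq0 // mulf_eq0 invr_eq0 pnatr_eq0 /= => /andP[/eqP sumE0 /eqP sumF0].
have E0 i j : E i j = 0.
  have sumEi0 := psumr_eq0P (fun i _ => sumr_ge0 _ (fun j _ => E_ge0 i j)) sumE0 (i:=i) isT.
  exact: (psumr_eq0P (fun j _ => E_ge0 i j) sumEi0 (i:=j) isT).
have edge i j : M i j != 0 -> x i 0 = x j 0.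
  move=> Mij_neq0; apply/eqP; rewrite -subr_eq0 -mul_conjC_eq0.
  have /eqP := E0 i j; rewrite /E mulf_eq0 oppr_eq0 mulf_eq0 (negPf Mij_neq0).
  by rewrite gt_eqF.
have x_i0 : x i0 0 = 0.
  apply/eqP; have /eqP := psumr_eq0P (fun i _ => F_ge0 i) sumF0 (i:=i0) isT.
  by rewrite /F mulf_eq0 mulf_eq0 (gt_eqF (xi_gt0 i0)) (gt_eqF Mrow_gt0) mul_conjC_eq0.
apply/eqP/matrixP => i j; rewrite ord1 mxE.
by rewrite (irreducible_mx_const i0 Mirr edge i) x_i0.
Qed.

Lemma ctr_trmxC m n (A : 'M[C]_(m, n)) : ctr A = A ^t*.
Proof. by rewrite -map_trmx. Qed.

Lemma quad_le_diag n (d e : 'rV[C]_n) (x : 'cV[C]_n) :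
  (forall i, d 0 i <= e 0 i) -> quad (diag_mx d) x <= quad (diag_mx e) x.
Proof.
move=> le_de; rewrite !quad_diagE ler_sum // => i _.
by rewrite ler_wpM2r ?mul_conjC_ge0.
Qed.

Lemma quad_scalar n (c : C) (x : 'cV[C]_n) : quad c%:M x = c * quad 1%:M x.
Proof. by rewrite -[c%:M]scalemx1 -scalemxAr -scalemxAl mxE. Qed.

Lemma quad_unitary n (P : 'M[C]_n) (x : 'cV[C]_n) :
  P \is unitarymx -> quad 1%:M (P^t* *m x) = quad 1%:M x.
Proof.
move=> Pu; rewrite !mulmx1 ctrM [ctr (P^t*)]ctr_trmxC trmxCK.
by rewrite mulmxA (mulmxtVK _ Pu).
Qed.

Lemma diag_mx_eigenvalue n (d : 'rV[C]_n) i : eigenvalue (diag_mx d) (d 0 i).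
Proof.
apply/eigenvalueP; exists (delta_mx 0 i); first by rewrite -rowE row_diag_mx.
by apply/negP => /eqP/matrixP/(_ 0 i); rewrite !mxE !eqxx => /eqP; rewrite oner_eq0.
Qed.

Section Hermitian.
Variables (n : nat) (Q : 'M[C]_n).
Hypothesis hermQ : hermitian_mx Q.
Let P := spectralmx Q.
Let d := spectral_diag Q.

Lemma hermitian_spectralE : Q = P^t* *m diag_mx d *m P.
Proof.
have normQ : Q \is normalmx by apply/normalmxP; rewrite -ctr_trmxC hermQ.
by rewrite -invmx_unitary ?spectral_unitarymx //; apply/orthomx_spectralP.
Qed.

Lemma spectral_diag_eigenvalue i : eigenvalue Q (d 0 i).
Proof.
have Pu := spectral_unitarymx Q.
apply/eigenvalueP; exists (delta_mx 0 i *m P).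
  rewrite {1}hermitian_spectralE !mulmxA (mulmxtVK _ Pu) -[_ *m diag_mx d]rowE.
  by rewrite row_diag_mx scalemxAl.
apply/negP => /eqP/(congr1 (fun v => v *m P^t*)); rewrite mul0mx (mulmxtVK _ Pu).
by move=> /matrixP/(_ 0 i); rewrite !mxE !eqxx => /eqP; rewrite oner_eq0.
Qed.

Lemma quad_hermitianE (x : 'cV[C]_n) : quad Q x = quad (diag_mx d) (P *m x).
Proof. by rewrite {1}hermitian_spectralE ctrM [ctr P]ctr_trmxC !mulmxA. Qed.

Lemma min_eigenvalue_quad_le (m : C) (x : 'cV[C]_n) :
  (forall l, eigenvalue Q l -> m <= l) -> m * quad 1%:M x <= quad Q x.
Proof.
move=> m_le; have PCu : P^t* \is unitarymx by rewrite trmxC_unitary spectral_unitarymx.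
rewrite -(quad_unitary x PCu) trmxCK quad_hermitianE -quad_scalar -diag_const_mx.
by rewrite quad_le_diag // => i; rewrite mxE; exact/m_le/spectral_diag_eigenvalue.
Qed.

End Hermitian.

Lemma posdef_eigenvalue_gt0 n (Q : 'M[C]_n) l :
  posdef Q -> eigenvalue Q l -> 0 < l.
Proof.
move=> [_ Qpos] /eigenvalueP[v vQ v_neq0].
have ctrv_neq0 : ctr v != 0.
  apply: contra v_neq0 => /eqP v0; rewrite -[v]ctrK v0.
  by apply/eqP/matrixP => i j; rewrite !mxE conjC0.
have := Qpos _ ctrv_neq0; rewrite ctrK vQ -scalemxAl mxE => lvv_gt0.
have vv_ge0 : 0 <= (v *m ctr v) 0 0.
  by rewrite mxE sumr_ge0 // => i _; rewrite !mxE mul_conjC_ge0.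
have vv_neq0 : (v *m ctr v) 0 0 != 0.
  by apply: contraTneq lvv_gt0 => ->; rewrite mulr0 ltxx.
by move: lvv_gt0; rewrite pmulr_lgt0 // lt_def vv_neq0 vv_ge0.
Qed.

Lemma psd_scale_posdef_sub_diag n (Q : 'M[C]_n) (xi : 'rV[C]_n) rho lmin :
  posdef Q -> (forall i, 0 <= xi 0 i) ->
  is_spectral_radius (diag_mx xi) rho -> is_min_eigenvalue Q lmin ->
  psd ((rho / lmin) *: Q - diag_mx xi).
Proof.
move=> Qpd xi_ge0 [[l [_ ->]] rho_max] [lmin_eig lmin_min].
have lmin_gt0 := posdef_eigenvalue_gt0 Qpd lmin_eig.
have c_ge0 : 0 <= `|l| / lmin by rewrite divr_ge0 // ltW.
split.
  apply: hermitian_mxB; first exact: hermitian_mxZ (ger0_real c_ge0) Qpd.1.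
  by apply: hermitian_diag_mx => i; rewrite ger0_real.
move=> x; rewrite quadZB subr_ge0.
have xi_le i : xi 0 i <= `|l|.
  by rewrite -(ger0_norm (xi_ge0 i)) rho_max ?diag_mx_eigenvalue.
apply: (le_trans (quad_le_diag (e := const_mx `|l|) x _)) => [i|]; first by rewrite mxE.
rewrite diag_const_mx quad_scalar -[X in X * _](divfK (lt0r_neq0 lmin_gt0)).
rewrite -(mulrA (`|l| / lmin)).
by apply: ler_wpM2l => //; apply: min_eigenvalue_quad_le Qpd.1 _ _ lmin_min.
Qed.

End QuadraticForms.

Section LaplacianBlocks.
Set Implicit Arguments.
Unset Strict Implicit.
Variables (C : numClosedFieldType) (K : nat) (nb : 'I_K -> nat).
Variable a : 'M[C]_(\sum_(k < K) nb k).
Hypothesis a_ge0 : forall i j, 0 <= a i j.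

Local Notation L := (laplacian a).
Local Notation Rank := (@tagnat.Rank _ nb).

Lemma Rank_eqE k q (i : 'I_(nb k)) (j : 'I_(nb q)) :
  (Rank k i == Rank q j) = (k == q) && (val i == val j).
Proof. by rewrite -tagnat.eq_Rank. Qed.

Lemma laplacian_blockE k q (i : 'I_(nb k)) (j : 'I_(nb q)) :
  submxblock L k q i j =
    ((k == q) && (val i == val j))%:R * (\sum_p a (Rank k i) p) - a (Rank k i) (Rank q j).
Proof. by rewrite !mxE Rank_eqE. Qed.

Lemma laplacian_diag_blockE k (i j : 'I_(nb k)) :
  submxblock L k k i j = (i == j)%:R * (\sum_p a (Rank k i) p) - a (Rank k i) (Rank k j).
Proof. by rewrite laplacian_blockE eqxx val_eqE. Qed.

Lemma laplacian_block_real k q i j : submxblock L k q i j \is Num.real.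
Proof.
rewrite laplacian_blockE rpredB ?rpredM ?rpred_nat ?rpred_sum ?ger0_real //.
by move=> p _; rewrite ger0_real.
Qed.

Lemma laplacian_diag_block_le0 k (i j : 'I_(nb k)) :
  i != j -> submxblock L k k i j <= 0.
Proof. by move=> /negPf nij; rewrite laplacian_diag_blockE nij mul0r sub0r oppr_le0. Qed.

Lemma laplacian_diag_block_rowsum k (i : 'I_(nb k)) :
  \sum_j submxblock L k k i j =
    \sum_(p | p \notin [set Rank k j | j : 'I_(nb k)]) a (Rank k i) p.
Proof.
rewrite (eq_bigr _ (fun j _ => laplacian_diag_blockE i j)).
have diag_term : \sum_j (i == j)%:R * (\sum_p a (Rank k i) p) = \sum_p a (Rank k i) p.
  rewrite (bigD1 i) //= eqxx mul1r [X in _ + X]big1 ?addr0 // => j /negPf ji.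
  by rewrite eq_sym ji mul0r.
rewrite sumrB diag_term (bigID (mem [set Rank k j | j : 'I_(nb k)])) /= big_imset /=.
  by rewrite addrC addrK.
by move=> j j' _ _ /eqP; rewrite Rank_eqE eqxx => /eqP/val_inj.
Qed.

Lemma laplacian_diag_block_rowsum_ge0 k (i : 'I_(nb k)) :
  0 <= \sum_j submxblock L k k i j.
Proof. by rewrite laplacian_diag_block_rowsum sumr_ge0. Qed.

Lemma laplacian_diag_block_rowsum_gt0 k q : k != q -> submxblock L k q != 0 ->
  exists i, 0 < \sum_j submxblock L k k i j.
Proof.
move=> /negPf kq /matrix0Pn[i [j]].
rewrite laplacian_blockE kq mul0r sub0r oppr_eq0 => aij.
exists i; rewrite laplacian_diag_block_rowsum (bigD1 (Rank q j)) /=; last first.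
  by apply/imsetP => -[j' _ /eqP]; rewrite Rank_eqE eq_sym kq.
by rewrite ltr_pwDl ?sumr_ge0 // lt_def aij a_ge0.
Qed.

End LaplacianBlocks.

Theorem mainTheorem7 (C : numClosedFieldType) (K : nat) (nb : 'I_K -> nat)
    (a : 'M[C]_(\sum_(k < K) nb k))
    (Ha : weight_matrix a)
    (Hnb : forall k, (0 < nb k)%N)
    (Hup : forall k q : 'I_K, (q < k)%N -> submxblock (laplacian a) k q = 0)
    (Hirr : forall k : 'I_K,
        nb k = 1%N \/ irreducible_mx (submxblock (laplacian a) k k))
    (Hconn : forall k : 'I_K, (k.+1 < K)%N ->
        exists q : 'I_K, (k < q)%N /\ submxblock (laplacian a) k q != 0) :
  forall (k : 'I_K), (k.+1 < K)%N ->
  let Lkk := submxblock (laplacian a) k k in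
  let Lt := tildeL Lkk in
  let Dk := Lkk - Lt in
  forall xi : 'rV[C]_(nb k),
    (forall i, 0 < xi 0 i) -> xi *m Lt = 0 -> \sum_i xi 0 i = 1 ->
  let Xi := diag_mx xi in
  let Rk := symmetrize (Xi *m Lt) in
  let Qk := symmetrize (Xi *m Lkk) in
  [/\ Qk = Rk + Xi *m Dk,
      posdef Qk &
      forall rho lmin, is_spectral_radius Xi rho -> is_min_eigenvalue Qk lmin ->
        psd ((rho / lmin) *: Qk - Xi)].
Proof.
move=> k lt_k1K Lkk Lt Dk xi xi_gt0 xiL _ Xi Rk Qk.
have [a_ge0 _] := Ha.
have [q [lt_kq Lkq_neq0]] := Hconn k lt_k1K.
have Qpd : posdef Qk.
  apply: posdef_symmetrize_diag_mul => //.
  - by move=> i j; apply: laplacian_block_real.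
  - exact: laplacian_diag_block_le0.
  - by move=> i; apply: laplacian_diag_block_rowsum_ge0.
  - by apply: (laplacian_diag_block_rowsum_gt0 a_ge0 _ Lkq_neq0); rewrite neq_ltn lt_kq.
  - by case: (Hirr k) => [/irreducible_mx_dim1|].
split=> //; first exact: symmetrize_diag_mul_tildeL.
by move=> rho lmin; apply: psd_scale_posdef_sub_diag => // i; apply: ltW.
Qed.
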